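(* For all integers $n,r,\lambda\ge1$, $l\ge0$, and every $\mathbf{p}=(p_1,p_2,p_3,p_4)$ with $p_i\in(0,1)$, $\sum_ip_i=1$, write $a=\lfloor p_1n\rfloor$, $u=\lfloor p_2n\rfloor$, $c=\lfloor p_3n\rfloor$, $g=n-a-u-c$, and let \[ \bar l_0=\min\big(\min(a,u)+g,\ \min(c,g)+u\big). \] Then $\bar{s}_{\mathbf{p},\lambda}^{[r]}(n,l)= s_\lambda^{[r]}(n,l)$ if $l\le\bar l_0$ and $\bar{s}_{\mathbf{p},\lambda}^{[r]}(n,l)=0$ otherwise; consequently $\bar{s}_{\mathbf{p},\lambda}^{[r]}(n)= \sum_{l=0}^{\bar l_0} s_\lambda^{[r]}(n,l)$.
   Context: A diagram on $n$ vertices is a graph on $\{1,\dots,n\}$ whose edges (arcs) are pairs $(i,j)$, $i<j$, of length $j-i$. For $\lambda\ge1$, an RNA secondary structure of length $n$ with minimum arc-length $\lambda$ is a diagram with every arc of length $\ge\lambda$, no two arcs sharing an endpoint, and no two arcs $(i_1,j_1),(i_2,j_2)$ with $i_1<i_2<j_1<j_2$. A stack of length $t$ is a maximal sequence of arcs $((i,j),(i+1,j-1),\ldots,(i+t-1,j-t+1))$; the structure is $r$-canonical if all stacks have length $\ge r$. $s_{\lambda}^{[r]}(n,l)$ counts such structures of length $n$ with $l$ arcs. Sequences are over $\{\mathbf{A},\mathbf{U},\mathbf{C},\mathbf{G}\}$ with allowed base pairs $\{\mathbf A,\mathbf U\}$, $\{\mathbf C,\mathbf G\}$ (Watson–Crick)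 and $\{\mathbf U,\mathbf G\}$ (wobble), each in either order; a sequence $x_1\cdots x_n$ is compatible with $S$ if $(x_i,x_j)$ is allowed for every arc $(i,j)$. $\bar{s}_{\mathbf{p},\lambda}^{[r]}(n,l)$ (resp. $\bar{s}_{\mathbf{p},\lambda}^{[r]}(n)$) is the number of $r$-canonical secondary structures of length $n$ with minimum arc-length $\lambda$ having $l$ arcs (resp. any number of arcs) that admit a compatible sequence with exactly $a$ letters $\mathbf A$, $u$ letters $\mathbf U$, $c$ letters $\mathbf C$ and $g$ letters $\mathbf G$. *)

From HB Require Import structures.
From mathcomp Require Import all_boot all_order all_algebra.
Set Implicit Arguments. Unset Strict Implicit. Unset Printing Implicit Defensive.
Import Order.TTheory GRing.Theory Num.Theory.

Inductive nuc := nA | nU | nC | nG.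

Definition nuc_to (x : nuc) : 'I_4 :=
  match x with nA => inord 0 | nU => inord 1 | nC => inord 2 | nG => inord 3 end.
Definition nuc_of (i : 'I_4) : option nuc :=
  match val i with 0 => Some nA | 1 => Some nU | 2 => Some nC | 3 => Some nG | _ => None end.
Lemma nuc_toK : pcancel nuc_to nuc_of.
Proof. by case; rewrite /nuc_of /= inordK. Qed.
HB.instance Definition _ := Finite.copy nuc (pcan_type nuc_toK).

Definition allowed_pair (x y : nuc) : bool :=
  match x, y with
  | nA, nU | nU, nA | nC, nG | nG, nC | nU, nG | nG, nU => true
  | _, _ => false
  end.

(* Diagrams on n vertices: vertices are 'I_n (vertex k+1 of the paper is k : 'I_n);
   an arc is a pair (i, j), of length j - i. *)
Definition diagram n := {set ('I_n * 'I_n)}.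

Definition is_arc n (S : diagram n) (i j : nat) : bool :=
  [exists e in S, (val e.1 == i) && (val e.2 == j)].

Definition sec_struct n (lam : nat) (S : diagram n) : bool :=
  [&& [forall e in S, (e.1 < e.2)%N && (lam <= e.2 - e.1)%N],
      [forall e in S, forall f in S, (e != f) ==>
          [&& e.1 != f.1, e.1 != f.2, e.2 != f.1 & e.2 != f.2]] &
      [forall e in S, forall f in S,
          ~~ [&& (e.1 < f.1)%N, (f.1 < e.2)%N & (e.2 < f.2)%N]]].

Definition is_stack n (S : diagram n) (i j t : nat) : bool :=
  [&& (0 < t)%N,
      [forall k : 'I_t, is_arc S (i + k) (j - k)],
      ~~ ((0 < i)%N && is_arc S i.-1 j.+1) &
      ~~ is_arc S (i + t) (j - t)].

Definition r_canonical n (r : nat) (S : diagram n) : Prop :=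
  forall i j t, is_stack S i j t -> (r <= t)%N.

Definition r_canonicalb n (r : nat) (S : diagram n) : bool :=
  [forall i : 'I_n, forall j : 'I_n, forall t : 'I_n.+1,
     is_stack S i j t ==> (r <= t)%N].

Lemma r_canonicalP n r (S : diagram n) : reflect (r_canonical r S) (r_canonicalb r S).
Proof.
apply: (iffP idP) => [H i j t st | H].
- have hi : (i < n)%N.
    move: st => /and4P [t0 /forallP /(_ (Ordinal t0)) /existsP [e /andP [_ /andP [/eqP e1 _]]]] _ _.
    by rewrite /= addn0 in e1; rewrite -e1.
  have hj : (j < n)%N.
    move: st => /and4P [t0 /forallP /(_ (Ordinal t0)) /existsP [e /andP [_ /andP [_ /eqP e2]]]] _ _.
    by rewrite /= subn0 in e2; rewrite -e2.
  have ht : (t < n.+1)%N.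
    move: st => /and4P [t0 /forallP Hk _ _].
    have tp : (t.-1 < t)%N by rewrite prednK.
    move: (Hk (Ordinal tp)) => /existsP [e /andP [_ /andP [/eqP e1 _]]].
    rewrite /= in e1; rewrite ltnS -(prednK t0).
    by apply: leq_trans _ (ltn_ord e.1); rewrite ltnS e1 leq_addl.
  move/forallP: H => /(_ (Ordinal hi)) /forallP /(_ (Ordinal hj)) /forallP /(_ (Ordinal ht)).
  by move/implyP; apply.
- by apply/forallP => i; apply/forallP => j; apply/forallP => t; apply/implyP; apply: H.
Qed.

Definition rna_struct n (lam r : nat) (S : diagram n) : bool :=
  sec_struct lam S && r_canonicalb r S.

Definition compatible n (S : diagram n) (x : {ffun 'I_n -> nuc}) : bool :=
  [forall e in S, allowed_pair (x e.1) (x e.2)].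

Definition count_letter n (x : {ffun 'I_n -> nuc}) (b : nuc) : nat :=
  #|[set i : 'I_n | x i == b]|.

Definition admits_comp n (S : diagram n) (a u c g : nat) : bool :=
  [exists x : {ffun 'I_n -> nuc},
     [&& compatible S x, count_letter x nA == a, count_letter x nU == u,
         count_letter x nC == c & count_letter x nG == g]].

Definition s_count (lam r n l : nat) : nat :=
  #|[set S : diagram n | rna_struct lam r S && (#|S| == l)]|.

Definition sbar_count (lam r n l a u c g : nat) : nat :=
  #|[set S : diagram n | [&& rna_struct lam r S, #|S| == l & admits_comp S a u c g]]|.

Definition sbar_count_all (lam r n a u c g : nat) : nat :=
  #|[set S : diagram n | rna_struct lam r S && admits_comp S a u c g]|.

From HB Require Import structures.
From mathcomp Require Import all_boot all_order all_algebra zify.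
Import Order.TTheory GRing.Theory Num.Theory.
Set Implicit Arguments. Unset Strict Implicit. Unset Printing Implicit Defensive.

(* Only the matching structure of S matters: a secondary structure with l arcs
   admits a sequence with a A's, u U's, c C's and g G's (a + u + c + g = n) iff
   l <= a + g, l <= u + g and l <= c + u, i.e. iff l <= l0.  Every allowed pair
   contains a letter of each of {A,G}, {U,G} and {C,U}, so the arcs inject into
   the positions carrying such letters.  Conversely, label x0 arcs AU, y0 arcs CG
   and z0 arcs UG with x0 + y0 + z0 = l, x0 <= a, x0 + z0 <= u, y0 <= c and
   y0 + z0 <= g, and spread the remaining letters over the n - 2l unpaired
   positions.  Since the criterion depends on l alone, the counts follow. *)

Lemma card_set_count (T : finType) (A : {set T}) (P : pred T) :
  #|[set i in A | P i]| = count P (enum A).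
Proof.
rewrite -size_filter -(card_uniqP (filter_uniq _ (enum_uniq _))).
by apply: eq_card => i; rewrite inE mem_filter mem_enum andbC.
Qed.

Lemma map_index_uniq (T : eqType) (s : seq T) :
  uniq s -> [seq index i s | i <- s] = iota 0 (size s).
Proof.
elim: s => //= x s IH /andP [xs /IH {}IH]; rewrite eqxx.
rewrite -[1]addn0 iotaDl -IH -map_comp; congr (_ :: _); apply/eq_in_map => y ys /=.
by rewrite ifN //; apply: contraNneq xs => ->.
Qed.

Lemma exists_fibers (T B : finType) (b0 : B) (A : {set T}) (k : B -> nat) :
  \sum_b k b = #|A| ->
  exists f : T -> B, forall b, #|[set i in A | f i == b]| = k b.
Proof.
move=> sum_k; pose s := flatten [seq nseq (k b) b | b <- enum B].
have size_s : size s = size (enum A).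
  rewrite size_flatten /shape -map_comp -cardE -sum_k sumnE big_map big_enum.
  by apply: eq_bigr => b _; rewrite /= size_nseq.
exists (fun i => nth b0 s (index i (enum A))) => b.
rewrite card_set_count -(count_map _ (pred1 b)) map_comp map_index_uniq ?enum_uniq //.
rewrite -size_s -/(mkseq _ _) mkseq_nth count_flatten -map_comp sumnE big_map big_enum.
rewrite (bigD1 b) //= count_nseq /= eqxx mul1n big1 ?addn0 // => b' nb'.
by rewrite count_nseq /= (negbTE nb').
Qed.

Lemma card_fiber_comp (T B C : finType) (A : {set T}) (f : T -> B) (h : B -> C) c :
  #|[set e in A | h (f e) == c]| = \sum_(b | h b == c) #|[set e in A | f e == b]|.
Proof.
rewrite -sum1_card (partition_big f (fun b => h b == c)) => [|e]; last by rewrite inE => /andP [].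
apply: eq_bigr => b /eqP hb; rewrite -sum1_card; apply: eq_bigl => e.
by rewrite !inE -andbA; case: (f e =P b) => [->|_]; rewrite ?hb ?eqxx ?andbF.
Qed.

Lemma card_imset_fiber (T U : finType) (B : eqType) (A : {set T}) (f : T -> U) (x : U -> B)
    (h : T -> B) b :
  {in A &, injective f} -> {in A, forall e, x (f e) = h e} ->
  #|[set i in f @: A | x i == b]| = #|[set e in A | h e == b]|.
Proof.
move=> f_inj xfh; have -> : [set i in f @: A | x i == b] = f @: [set e in A | h e == b].
  apply/setP => i; rewrite !inE; apply/andP/imsetP => [[/imsetP [e eA ->]]|[e]].
    by rewrite xfh // => he; exists e; rewrite // inE eA.
  by rewrite inE => /andP [eA he] ->; rewrite imset_f // xfh.
by apply: card_in_imset => e e' /[!inE] /andP [eA _] /andP [e'A _]; apply: f_inj.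
Qed.

(* An arc whose left end carries [y] gets [partner y] at its right end; the
   arcs are labelled AU, UG or CG. *)
Definition partner (y : nuc) : nuc :=
  match y with nA => nU | nU => nG | nC => nG | nG => nU end.

Lemma allowed_partner y : allowed_pair y (partner y).
Proof. by case: y. Qed.

Definition nuc_code (y : nuc) : nat :=
  match y with nA => 0 | nU => 1 | nC => 2 | nG => 3 end.

(* Equality on [nuc] is inherited from ['I_4] through [inord] and does not
   compute; this rule decides it. *)
Lemma eq_nucE y z : (y == z) = (nuc_code y == nuc_code z).
Proof. by apply/eqP/eqP => [->|]; case: y; case: z. Qed.

Lemma big_nuc (F : nuc -> nat) : \sum_b F b = F nA + F nU + F nC + F nG.
Proof.
have nuc_uniq : uniq [:: nA; nU; nC; nG] by apply: (@map_uniq _ _ nuc_code).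
rewrite (perm_big [:: nA; nU; nC; nG]) /= ?big_cons ?big_nil ?addn0 ?addnA //.
apply: uniq_perm; [exact: index_enum_uniq | exact: nuc_uniq | move=> b].
by rewrite mem_index_enum; case: b; rewrite !inE eqxx ?orbT.
Qed.

Lemma card_letters2 n (x : {ffun 'I_n -> nuc}) b1 b2 : b1 != b2 ->
  #|[set i | (x i == b1) || (x i == b2)]| = count_letter x b1 + count_letter x b2.
Proof.
move=> b12; rewrite /count_letter -cardsUI -[LHS]addn0; congr (_ + _).
  by apply: eq_card => i; rewrite !inE.
apply/esym/eqP; rewrite cards_eq0; apply/eqP/setP => i; rewrite !inE.
by case: eqP => // ->; rewrite (negbTE b12).
Qed.

(* [x0], [y0], [z0] are the numbers of arcs to be labelled AU, CG and UG. *)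
Lemma arc_kinds_split l a u c g : l <= a + g -> l <= u + g -> l <= c + u ->
  exists x0 y0 z0, [/\ x0 + y0 + z0 = l, x0 <= a, x0 + z0 <= u, y0 <= c & y0 + z0 <= g].
Proof.
move=> lag lug lcu; pose x0 := minn l (minn a u); pose y0 := minn (l - x0) c.
by exists x0, y0, (l - x0 - y0); rewrite /y0 /x0; split; lia.
Qed.

Section Matching.

Variables (n : nat) (S : diagram n).
Hypothesis arc_ltn : {in S, forall e : 'I_n * 'I_n, e.1 < e.2}.
Hypothesis arcs_disjoint : {in S &, forall e f, e != f ->
  [&& e.1 != f.1, e.1 != f.2, e.2 != f.1 & e.2 != f.2]}.

Lemma arc_fst_inj : {in S &, injective fst}.
Proof.
move=> e f eS fS; apply: contra_eq => /(arcs_disjoint eS fS).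
by case/and4P.
Qed.

Lemma arc_snd_inj : {in S &, injective snd}.
Proof.
move=> e f eS fS; apply: contra_eq => /(arcs_disjoint eS fS).
by case/and4P.
Qed.

Lemma arc_fst_neq_snd : {in S &, forall e f, e.1 != f.2}.
Proof.
move=> e f eS fS; have [<-|/(arcs_disjoint eS fS) /and4P [] //] := eqVneq e f.
by rewrite -val_eqE /= neq_ltn arc_ltn.
Qed.

Definition lefts := [set e.1 | e in S].
Definition rights := [set e.2 | e in S].
Definition unpaired := ~: (lefts :|: rights).

Lemma disjoint_lefts_rights : [disjoint lefts & rights].
Proof.
apply/pred0P => i /=; apply/andP => -[/imsetP [e eS ->] /imsetP [f fS]].
by apply/eqP; apply: arc_fst_neq_snd.
Qed.

Lemma card_lefts : #|lefts| = #|S|.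
Proof. exact: card_in_imset arc_fst_inj. Qed.

Lemma card_rights : #|rights| = #|S|.
Proof. exact: card_in_imset arc_snd_inj. Qed.

Lemma card_unpaired : #|unpaired| = n - 2 * #|S|.
Proof.
have := cardsC (lefts :|: rights).
rewrite card_ord cardsU (disjoint_setI0 disjoint_lefts_rights) cards0.
by rewrite card_lefts card_rights /unpaired; lia.
Qed.

Lemma card_matching_le_cover (C : {set 'I_n}) :
  {in S, forall e, (e.1 \in C) || (e.2 \in C)} -> #|S| <= #|C|.
Proof.
move=> cover; pose end_in e : 'I_n := if e.1 \in C then e.1 else e.2.
have end_inj : {in S &, injective end_in}.
  move=> e f eS fS; rewrite /end_in; case: ifP => _; case: ifP => _ ef.
  - exact: arc_fst_inj.
  - by move: (arc_fst_neq_snd eS fS); rewrite ef eqxx.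
  - by move: (arc_fst_neq_snd fS eS); rewrite ef eqxx.
  - exact: arc_snd_inj.
rewrite -(card_in_imset end_inj); apply/subset_leq_card/subsetP => _ /imsetP [e eS ->].
by rewrite /end_in; case: ifP => //; move: (cover e eS) => /orP [->|].
Qed.

Section Labelling.

Variable B : eqType.
Variables (lft rgt : 'I_n * 'I_n -> B) (free : 'I_n -> B).

Definition labelling : {ffun 'I_n -> B} :=
  [ffun i => if [pick e in S | e.1 == i] is Some e then lft e
             else if [pick e in S | e.2 == i] is Some e then rgt e else free i].

Lemma labelling_fst e : e \in S -> labelling e.1 = lft e.
Proof.
move=> eS; rewrite ffunE; case: pickP => [f /andP [fS /eqP /(arc_fst_inj fS eS) -> //]|].
by move/(_ e); rewrite eS eqxx.
Qed.

Lemma labelling_snd e : e \in S -> labelling e.2 = rgt e.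
Proof.
move=> eS; rewrite ffunE; case: pickP => [f /andP [fS /eqP fe]|_].
  by move: (arc_fst_neq_snd fS eS); rewrite fe eqxx.
case: pickP => [f /andP [fS /eqP /(arc_snd_inj fS eS) -> //]|].
by move/(_ e); rewrite eS eqxx.
Qed.

Lemma labelling_unpaired i : i \in unpaired -> labelling i = free i.
Proof.
rewrite !inE negb_or => /andP [iL iR]; rewrite ffunE.
case: pickP => [e /andP [eS /eqP ei]|_]; first by rewrite -ei imset_f in iL.
case: pickP => [e /andP [eS /eqP ei]|_ //]; by rewrite -ei imset_f in iR.
Qed.

Lemma card_labelling b : #|[set i | labelling i == b]| =
  #|[set e in S | lft e == b]| + #|[set e in S | rgt e == b]|
  + #|[set i in unpaired | free i == b]|.
Proof.
set X := [set i | labelling i == b].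
have XL : #|X :&: lefts| = #|[set e in S | lft e == b]|.
  rewrite -(card_imset_fiber b arc_fst_inj labelling_fst).
  by apply: eq_card => i; rewrite !inE andbC.
have XR : #|X :&: rights| = #|[set e in S | rgt e == b]|.
  rewrite -(card_imset_fiber b arc_snd_inj labelling_snd).
  by apply: eq_card => i; rewrite !inE andbC.
have XU : #|X :\: (lefts :|: rights)| = #|[set i in unpaired | free i == b]|.
  apply: eq_card => i; rewrite !inE.
  have [/labelling_unpaired -> //|] := boolP (i \in unpaired).
  by rewrite !inE negbK => ->.
rewrite -XL -XR -XU -(cardsID (lefts :|: rights) X) setIUr cardsU.
suff -> : X :&: lefts :&: (X :&: rights) = set0 by rewrite cards0 subn0.
apply/setP => i; have /pred0P/(_ i) /= LR := disjoint_lefts_rights.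
by rewrite !inE andbACA LR andbF.
Qed.

End Labelling.

Lemma admits_comp_bounds a u c g : admits_comp S a u c g ->
  [/\ #|S| <= a + g, #|S| <= u + g & #|S| <= c + u].
Proof.
case/existsP => x /and5P [/forall_inP compat /eqP <- /eqP <- /eqP <- /eqP <-].
have cover b1 b2 : b1 != b2 ->
    (forall y z, allowed_pair y z -> [|| y == b1, y == b2, z == b1 | z == b2]) ->
    #|S| <= count_letter x b1 + count_letter x b2.
  move=> b12 hit; rewrite -card_letters2 //.
  apply: card_matching_le_cover => e eS.
  by rewrite !inE -orbA; apply: hit; apply: compat.
by split; apply: cover => [|y z]; rewrite ?eq_nucE //; case: y; case: z.
Qed.

Lemma admits_comp_of_bounds a u c g : a + u + c + g = n ->
  #|S| <= a + g -> #|S| <= u + g -> #|S| <= c + u -> admits_comp S a u c g.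
Proof.
move=> sum_n /arc_kinds_split /[apply] /[apply] -[x0 [y0 [z0 [sum_l x0a x0z0u y0c y0z0g]]]].
pose kind_count b := match b with nA => x0 | nU => z0 | nC => y0 | nG => 0 end.
have [kind kindP] : exists kind : 'I_n * 'I_n -> nuc,
    forall b, #|[set e in S | kind e == b]| = kind_count b.
  by apply: (exists_fibers nA); rewrite big_nuc /= -sum_l; lia.
pose free_count b :=
  match b with nA => a - x0 | nU => u - x0 - z0 | nC => c - y0 | nG => g - y0 - z0 end.
have [free freeP] : exists free : 'I_n -> nuc,
    forall b, #|[set i in unpaired | free i == b]| = free_count b.
  by apply: (exists_fibers nA); rewrite big_nuc card_unpaired /= -sum_l; lia.
set x := labelling kind (partner \o kind) free.
have count b : count_letter x b =
    kind_count b + \sum_(b' | partner b' == b) kind_count b' + free_count b.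
  rewrite /count_letter card_labelling // kindP (card_fiber_comp S kind partner) freeP.
  by congr (_ + _ + _); apply: eq_bigr => b' _; rewrite kindP.
apply/existsP; exists x; apply/and5P; split.
- apply/forall_inP => e eS; rewrite /x labelling_fst // labelling_snd //.
  exact: allowed_partner.
all: by rewrite count big_mkcond big_nuc !eq_nucE /=; apply/eqP; lia.
Qed.

End Matching.

Lemma card_weight_le_sum (T : finType) (P : pred T) (w : T -> nat) m :
  #|[set x | P x && (w x <= m)]| = \sum_(0 <= l < m.+1) #|[set x | P x && (w x == l)]|.
Proof.
elim: m => [|m IH]; first by rewrite big_nat1; apply: eq_card => x; rewrite !inE leqn0.
rewrite big_nat_recr //= -IH -(cardsID [set x | w x <= m]).
congr (_ + _); apply: eq_card => x; rewrite !inE.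
  by case: (P x) => //=; rewrite andbC; apply: andb_idr => /leqW.
by case: (P x); rewrite /= ?andbF // -ltnNge eqn_leq andbC.
Qed.

Lemma truncn_mul_sum_le (R : archiFieldType) (p1 p2 p3 p4 : R) n :
  (0 <= p1)%R -> (0 <= p2)%R -> (0 <= p3)%R -> (0 <= p4)%R -> (p1 + p2 + p3 + p4 = 1)%R ->
  Num.truncn (p1 * n%:R) + Num.truncn (p2 * n%:R) + Num.truncn (p3 * n%:R) <= n.
Proof.
move=> p1ge0 p2ge0 p3ge0 p4ge0 sum1; rewrite -(ler_nat R) !natrD.
have le_trunc p : (0 <= p)%R -> ((Num.truncn (p * n%:R))%:R <= p * n%:R :> R)%R.
  by move=> p_ge0; rewrite truncn_le mulr_ge0.
apply: (le_trans (lerD (lerD (le_trunc _ p1ge0) (le_trunc _ p2ge0)) (le_trunc _ p3ge0))).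
rewrite -!mulrDl ler_piMl //; apply: le_trans (_ : p1 + p2 + p3 + p4 <= 1)%R.
  by rewrite lerDl.
by rewrite sum1.
Qed.


Lemma admits_compE n lam (S : diagram n) a u c g :
  sec_struct lam S -> a + u + c + g = n ->
  admits_comp S a u c g = (#|S| <= minn (minn a u + g) (minn c g + u)).
Proof.
case/and3P => /forall_inP arc_ok /forall_inP disj _ sum_n.
have arc_ltn : {in S, forall e : 'I_n * 'I_n, e.1 < e.2}.
  by move=> e /arc_ok /andP [].
have arcs_disjoint : {in S &, forall e f, e != f ->
    [&& e.1 != f.1, e.1 != f.2, e.2 != f.1 & e.2 != f.2]}.
  by move=> e f /disj /forall_inP /[apply] /implyP.
apply/idP/idP => [/(admits_comp_bounds arc_ltn arcs_disjoint) []|le_l0].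
  by lia.
by apply: admits_comp_of_bounds => //; lia.
Qed.

Theorem mainTheorem7 (R : archiFieldType) (n r lam : nat) (p1 p2 p3 p4 : R) :
  (1 <= n)%N -> (1 <= r)%N -> (1 <= lam)%N ->
  (0 < p1 < 1)%R -> (0 < p2 < 1)%R -> (0 < p3 < 1)%R -> (0 < p4 < 1)%R ->
  (p1 + p2 + p3 + p4 = 1)%R ->
  let a := Num.truncn (p1 * n%:R)%R in
  let u := Num.truncn (p2 * n%:R)%R in
  let c := Num.truncn (p3 * n%:R)%R in
  let g := (n - a - u - c)%N in
  let l0 := minn (minn a u + g) (minn c g + u) in
  (forall l : nat,
     sbar_count lam r n l a u c g = (if (l <= l0)%N then s_count lam r n l else 0%N)) /\
  sbar_count_all lam r n a u c g = (\sum_(0 <= l < l0.+1) s_count lam r n l)%N.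
Proof.
move=> _ _ _ /andP [p1_gt0 _] /andP [p2_gt0 _] /andP [p3_gt0 _] /andP [p4_gt0 _] sum1.
move=> a u c g l0.
have sum_n : a + u + c + g = n.
  by have := truncn_mul_sum_le n (ltW p1_gt0) (ltW p2_gt0) (ltW p3_gt0) (ltW p4_gt0) sum1; lia.
have admits (S : diagram n) : rna_struct lam r S -> admits_comp S a u c g = (#|S| <= l0).
  by case/andP => secS _; rewrite (admits_compE secS sum_n).
split=> [l|]; last first.
  rewrite /sbar_count_all /s_count -card_weight_le_sum.
  by apply: eq_card => S; rewrite !inE; case: (boolP (rna_struct _ _ S)) => // /admits ->.
rewrite /sbar_count /s_count; case: leqP => [le_l0|lt_l0].
  apply: eq_card => S; rewrite !inE; case: (boolP (rna_struct _ _ S)) => //= /admits ->.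
  by case: eqP => // ->; rewrite le_l0.
apply/eqP; rewrite cards_eq0; apply/eqP/setP => S; rewrite !inE.
case: (boolP (rna_struct _ _ S)) => //= /admits ->.
by case: eqP => // ->; rewrite leqNgt lt_l0.
Qed.
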